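(* Let $\vec r:\mathbb{Z}\to\mathbb{R}^3$ be a discrete centroaffine space curve with constant invariants $\kappa_n=\kappa$, $\bar\kappa_n=\bar\kappa$, $\tau_n=\tau$, let $\alpha\in(0,1)$ be a constant, and define $\vec r'_n=(1-\alpha)\vec r_n+\alpha\vec r_{n+1}$ (iteration of the definite proportional division point). If $\vec r'$ is again a discrete centroaffine space curve, then its invariants satisfy $\kappa'_n=\kappa$, $\bar\kappa'_n=\bar\kappa$, $\tau'_n=\tau$ for all $n$.
   Context: A discrete centroaffine space curve is a map $\vec r:\mathbb{Z}\to\mathbb{R}^3$ with $[\vec r_{k-1},\vec r_k,\vec r_{k+1}]\ne0$ for all $k$, where $\vec r_k=\vec r(k)$, $[\cdot,\cdot,\cdot]$ is the $3\times3$ determinant and $\vec t_k=\vec r_{k+1}-\vec r_k$. With $D_k=[\vec r_{k-1},\vec r_k,\vec r_{k+1}]$: $\kappa_k=\frac{[\vec r_k,\vec r_{k+1},\vec r_{k+2}]}{D_k}$, $\bar\kappa_k=\frac{[\vec r_{k+1},\vec t_{k-1},\vec t_{k+1}]}{D_k}$, $\tau_k=\frac{[\vec t_{k-1},\vec t_k,\vec t_{k+1}]}{D_k}$ (first/second centroaffine curvature and centroaffine torsion). *)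

From HB Require Import structures.
From mathcomp Require Import all_boot all_order all_algebra.
Set Implicit Arguments. Unset Strict Implicit. Unset Printing Implicit Defensive.
Import Order.TTheory GRing.Theory Num.Theory.
Local Open Scope ring_scope.

Definition det3 (R : realFieldType) (u v w : 'rV[R]_3) : R :=
  \det (\matrix_(i < 3, j < 3)
          (if i == 0 :> nat then u ord0 j
           else if i == 1 :> nat then v ord0 j else w ord0 j)).

Definition tangent (R : realFieldType) (r : int -> 'rV[R]_3) (k : int) : 'rV[R]_3 :=
  r (k + 1) - r k.

Definition Dk (R : realFieldType) (r : int -> 'rV[R]_3) (k : int) : R :=
  det3 (r (k - 1)) (r k) (r (k + 1)).

Definition centroaffine_curve (R : realFieldType) (r : int -> 'rV[R]_3) : Prop :=
  forall k : int, Dk r k != 0.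

Definition ca_kappa (R : realFieldType) (r : int -> 'rV[R]_3) (k : int) : R :=
  det3 (r k) (r (k + 1)) (r (k + 2)) / Dk r k.

Definition ca_kappabar (R : realFieldType) (r : int -> 'rV[R]_3) (k : int) : R :=
  det3 (r (k + 1)) (tangent r (k - 1)) (tangent r (k + 1)) / Dk r k.

Definition ca_tau (R : realFieldType) (r : int -> 'rV[R]_3) (k : int) : R :=
  det3 (tangent r (k - 1)) (tangent r k) (tangent r (k + 1)) / Dk r k.

Definition division_curve (R : realFieldType) (a : R) (r : int -> 'rV[R]_3) :
  int -> 'rV[R]_3 := fun n => (1 - a) *: r n + a *: r (n + 1).

From HB Require Import structures.
From mathcomp Require Import all_boot all_order all_algebra ring.
Set Implicit Arguments. Unset Strict Implicit. Unset Printing Implicit Defensive.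
Import Order.TTheory GRing.Theory Num.Theory.
Local Open Scope ring_scope.

(* A centroaffine curve with [D_k <> 0] is determined by the linear recurrence
   [r_{k+2} = (tau + 1 + kappabar) r_{k+1} - (kappabar + kappa) r_k + kappa r_{k-1}],
   and conversely the invariants can be read off from such a recurrence.  With
   constant invariants the coefficients are constant, so the recurrence is linear
   with constant coefficients and is inherited by every combination
   [(1 - alpha) r_n + alpha r_{n+1}]; reading the invariants back off gives the
   same constants. *)

Section Coordinates.

Variable R : realFieldType.
Implicit Types (u v w : 'rV[R]_3) (a : R).

Definition coord u (k : nat) : R := u ord0 (inord k).

Lemma coordE u (j : 'I_3) : u ord0 j = coord u j.
Proof. by rewrite /coord inord_val. Qed.

Lemma coordD u v k : coord (u + v) k = coord u k + coord v k.
Proof. by rewrite /coord mxE. Qed.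

Lemma coordN u k : coord (- u) k = - coord u k.
Proof. by rewrite /coord mxE. Qed.

Lemma coordZ a u k : coord (a *: u) k = a * coord u k.
Proof. by rewrite /coord mxE. Qed.

Lemma row3P u v : [/\ coord u 0 = coord v 0, coord u 1 = coord v 1
                     & coord u 2 = coord v 2] -> u = v.
Proof.
move=> [h0 h1 h2]; apply/rowP => j; rewrite !coordE.
by case: j => [[|[|[|//]]] ?].
Qed.

Lemma det3E u v w : det3 u v w =
    coord u 0 * (coord v 1 * coord w 2 - coord v 2 * coord w 1)
  - coord u 1 * (coord v 0 * coord w 2 - coord v 2 * coord w 0)
  + coord u 2 * (coord v 0 * coord w 1 - coord v 1 * coord w 0).
Proof.
rewrite /det3 (expand_det_row _ ord0) !big_ord_recl big_ord0 /cofactor.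
rewrite !(expand_det_row _ ord0) !big_ord_recl !big_ord0 /cofactor.
by rewrite !det_mx11 !mxE /= !coordE /= /bump /=; ring.
Qed.

End Coordinates.

Definition satisfies_recurrence (R : realFieldType) (r : int -> 'rV[R]_3)
    (a b c : R) (k : int) : Prop :=
  r (k + 2) = a *: r (k + 1) + b *: r k + c *: r (k - 1).

Lemma subr1K (k : int) : k - 1 + 1 = k.
Proof. exact: subrK. Qed.

Lemma addr1_1 (k : int) : k + 1 + 1 = k + 2.
Proof. by rewrite -addrA. Qed.

Lemma invariants_of_recurrence (R : realFieldType) (r : int -> 'rV[R]_3)
    (a b c : R) (k : int) :
  Dk r k != 0 -> satisfies_recurrence r a b c k ->
  [/\ ca_kappa r k = c, ca_kappabar r k = - c - b & ca_tau r k = a - 1 + b + c].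
Proof.
rewrite /satisfies_recurrence /ca_kappa /ca_kappabar /ca_tau /tangent /Dk.
rewrite subr1K addr1_1 => hD ->.
rewrite !det3E !(coordD, coordN, coordZ) in hD *.
by split; field; exact: hD.
Qed.

Lemma recurrence_of_invariants (R : realFieldType) (r : int -> 'rV[R]_3)
    (k : int) :
  Dk r k != 0 ->
  satisfies_recurrence r (ca_tau r k + 1 + ca_kappabar r k)
    (- ca_kappabar r k - ca_kappa r k) (ca_kappa r k) k.
Proof.
rewrite /satisfies_recurrence /ca_kappa /ca_kappabar /ca_tau /tangent /Dk.
rewrite subr1K addr1_1 => hD; apply: row3P.
rewrite !det3E !(coordD, coordN, coordZ) in hD *.
by split; field; exact: hD.
Qed.

Lemma division_curve_recurrence (R : realFieldType) (r : int -> 'rV[R]_3)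
    (alpha a b c : R) (k : int) :
  satisfies_recurrence r a b c k -> satisfies_recurrence r a b c (k + 1) ->
  satisfies_recurrence (division_curve alpha r) a b c k.
Proof.
rewrite /satisfies_recurrence /division_curve addr1_1 subr1K addrK.
have -> : k + 2 + 1 = k + 1 + 2 by rewrite addrAC.
move=> -> ->.
by apply: row3P; rewrite !(coordD, coordZ); split; ring.
Qed.

Theorem proposition7p2 (R : realFieldType) (r : int -> 'rV[R]_3)
  (kappa kappabar tau alpha : R) :
  centroaffine_curve r ->
  (forall n : int, ca_kappa r n = kappa) ->
  (forall n : int, ca_kappabar r n = kappabar) ->
  (forall n : int, ca_tau r n = tau) ->
  0 < alpha < 1 ->
  centroaffine_curve (division_curve alpha r) ->
  forall n : int,
    [/\ ca_kappa (division_curve alpha r) n = kappa,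
        ca_kappabar (division_curve alpha r) n = kappabar &
        ca_tau (division_curve alpha r) n = tau].
Proof.
move=> hr hk hkb ht _ hr' n.
have rec k : satisfies_recurrence r (tau + 1 + kappabar) (- kappabar - kappa)
               kappa k.
  by rewrite -(hk k) -(hkb k) -(ht k); apply: recurrence_of_invariants.
have rec' := division_curve_recurrence alpha (rec n) (rec (n + 1)).
have [-> -> ->] := invariants_of_recurrence (hr' n) rec'.
by split; ring.
Qed.
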